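(* For $n \ge 0$ let $d(n) = \sum_{k \ge 0} w(n-k,k)$ (with $w(m,k)=0$ for $m<0$). Then: (i) $d(n) = c_{ie}(n)$ for all $n \ge 0$; (ii) $\displaystyle\sum_{n \ge 0} d(n) q^n = \frac{1-q^2+q^3}{1 - q - 2 q^2 + 2 q^3}$; (iii) for $n \ge 1$, $d(n) = 2^m - 1$ if $n = 2m-1$, and $d(n) = 3\cdot 2^{m-1} - 1$ if $n = 2m$.
   Context: A composition of $n \ge 0$ is a finite sequence $(c_1,\dots,c_t)$ of positive integers with $c_1+\cdots+c_t=n$; the empty composition is the unique composition of $0$. Let $C_{12}(n)$ be the set of compositions of $n$ all of whose parts lie in $\{1,2\}$. The number of water cells of a composition $(c_1,\dots,c_t)$ is $\sum_{i=1}^{t} \max\bigl(0, \min(\max_{j \le i} c_j, \max_{j \ge i} c_j) - c_i\bigr)$ (the number of unit squares that would hold water poured over its bargraph, in which column $i$ has height $c_i$). For $n,k \ge 0$, $W(n,k)$ is the set of compositions in $C_{12}(n)$ with exactly $k$ water cells and $w(n,k)=|W(n,k)|$. $C_{ie}(n)$ is the set of compositions $(c_1,\dots,c_t)$ of $n$ such that every internal part $c_2,\dots,c_{t-1}$ is even (so all compositions with $t \le 2$ are included, including the empty composition when $n=0$), and $c_{ie}(n)=|C_{ie}(n)|$. *)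

From mathcomp Require Import all_boot all_order all_algebra.
Set Implicit Arguments. Unset Strict Implicit. Unset Printing Implicit Defensive.
Import GRing.Theory.

Fixpoint seqs_len (A : seq nat) (k : nat) : seq (seq nat) :=
  if k is k'.+1 then [seq x :: s | x <- A, s <- seqs_len A k'] else [:: [::]].

(* All sequences of length <= n with entries in {1,...,n}: every composition
   of n occurs exactly once in this list. *)
Definition cand (n : nat) : seq (seq nat) :=
  flatten [seq seqs_len (iota 1 n) k | k <- iota 0 n.+1].

Definition is_comp (n : nat) (s : seq nat) : bool :=
  all (fun c => 0 < c) s && (sumn s == n).

Definition is_comp12 (n : nat) (s : seq nat) : bool :=
  is_comp n s && all (fun c => (c == 1) || (c == 2)) s.

(* Number of water cells of the bargraph of s (truncated subtraction
   realizes max(0, .)). *)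
Definition water (s : seq nat) : nat :=
  \sum_(i < size s)
    (minn (\max_(j < size s | j <= i) nth 0 s j)
          (\max_(j < size s | i <= j) nth 0 s j) - nth 0 s i).

Definition w (n k : nat) : nat :=
  count (fun s => is_comp12 n s && (water s == k)) (cand n).

Definition internal (s : seq nat) : seq nat := drop 1 (take (size s).-1 s).

Definition c_ie (n : nat) : nat :=
  count (fun s => is_comp n s && all (fun c => ~~ odd c) (internal s)) (cand n).

(* d(n) = sum_{k>=0} w(n-k,k); terms with k > n vanish (w(m,k)=0 for m<0). *)
Definition d (n : nat) : nat := \sum_(k < n.+1) w (n - k) k.

From mathcomp Require Import all_boot all_order all_algebra zify.
Set Implicit Arguments. Unset Strict Implicit. Unset Printing Implicit Defensive.
Import GRing.Theory.

(* A leading 1 adds one cell and no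
   water, since it is never higher than what follows; a leading 2 is a wall
   that traps exactly one cell above every later 1 that has a 2 somewhere to
   its right.  So the number d(n) of compositions with parts + water = n
   satisfies d(n+2) = d(n+1) + b(n), where b(n) counts the sequences of area n
   behind a wall of height 2.  In turn b(n+2) = 2 b(n): those starting with 2
   are b(n) many, and so are those starting with 1, because a leading 1 gains
   a water cell exactly when a 2 follows and there is exactly one 2-free
   sequence of each area; hence b(n) = 2^(n/2).  Splitting off the first
   part of a composition with even internal parts gives the same recurrence
   for c_ie with the same initial values, and (ii), (iii) follow from the
   recurrence alone. *)

Lemma count_split (T : Type) (b a : pred T) (s : seq T) :
  count a s = count (fun x => b x && a x) s + count (fun x => ~~ b x && a x) s.
Proof. by elim: s => //= x s ->; case: (a x); case: (b x); rewrite /= ?addnS ?addnA. Qed.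

Lemma count_andl (T : Type) (b : bool) (a : pred T) (s : seq T) :
  count (fun x => b && a x) s = b * count a s.
Proof. by case: b; rewrite ?mul1n ?mul0n //; elim: s. Qed.

Lemma eq_count_uniq (T : eqType) (P : pred T) (s1 s2 : seq T) :
  uniq s1 -> uniq s2 -> (forall x, P x -> (x \in s1) = (x \in s2)) ->
  count P s1 = count P s2.
Proof.
move=> u1 u2 eq12; rewrite -!size_filter; apply: perm_size.
apply: uniq_perm; rewrite ?filter_uniq //.
by move=> x; rewrite !mem_filter; case Px: (P x) => //=; apply: eq12.
Qed.

Definition seqs_upto (A : seq nat) (m : nat) : seq (seq nat) :=
  flatten [seq seqs_len A k | k <- iota 0 m.+1].
Arguments seqs_upto : simpl never.

Lemma candE n : cand n = seqs_upto (iota 1 n) n.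
Proof. by []. Qed.

Lemma mem_seqs_len A k s :
  (s \in seqs_len A k) = (size s == k) && all (mem A) s.
Proof.
elim: k s => [|k IHk] [|x s] //=; first by apply/allpairsP => -[[y t] [_ _]].
apply/allpairsP/and3P => [[[y t] /= [Ay]] | [/eqP[sz] Ax As]].
  by rewrite IHk => /andP[/eqP<- At] [-> ->].
by exists (x, s); rewrite IHk sz eqxx As.
Qed.

Lemma uniq_seqs_len A k : uniq A -> uniq (seqs_len A k).
Proof.
move=> uA; elim: k => [|k IHk] //=.
by apply: allpairs_uniq => // -[x s] [y t] _ _ [-> ->].
Qed.

Lemma mem_seqs_upto A m s :
  (s \in seqs_upto A m) = (size s <= m) && all (mem A) s.
Proof.
apply/flatten_mapP/andP => [[k] | [sz As]].
  by rewrite mem_iota mem_seqs_len => km /andP[/eqP sz ->]; rewrite -ltnS sz.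
by exists (size s); rewrite ?mem_iota ?mem_seqs_len ?eqxx.
Qed.

Lemma seqs_upto_S A m : seqs_upto A m.+1 = seqs_upto A m ++ seqs_len A m.+1.
Proof. by rewrite /seqs_upto -addn1 iotaD map_cat flatten_cat /= cats0. Qed.

Lemma uniq_seqs_upto A m : uniq A -> uniq (seqs_upto A m).
Proof.
move=> uA; elim: m => [|m IHm] //.
rewrite seqs_upto_S cat_uniq IHm uniq_seqs_len // andbT.
apply/hasPn => s; rewrite mem_seqs_len mem_seqs_upto => /andP[/eqP-> _].
by rewrite ltnn.
Qed.

Lemma count_seqs_upto_S A m (P : pred (seq nat)) :
  count P (seqs_upto A m.+1) =
  P [::] + \sum_(x <- A) count (fun s => P (x :: s)) (seqs_upto A m).
Proof.
have count_upto (Q : pred (seq nat)) n :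
    count Q (seqs_upto A n) = \sum_(k < n.+1) count Q (seqs_len A k).
  by rewrite /seqs_upto count_flatten sumnE !big_map
             -(big_mkord xpredT (fun k => count Q (seqs_len A k))) /index_iota subn0.
have count_cons B t : count P [seq x :: s | x <- B, s <- t] =
                      \sum_(x <- B) count (fun s => P (x :: s)) t.
  by elim: B => [|x B IHB]; rewrite ?big_nil ?big_cons //= count_cat count_map IHB.
rewrite count_upto big_ord_recl; congr (_ + _); first by rewrite /= addn0.
rewrite (eq_bigr (fun k : 'I_m.+1 =>
  \sum_(x <- A) count (fun s => P (x :: s)) (seqs_len A k))) => [|k _]; last exact: count_cons.
by rewrite exchange_big; apply: eq_bigr => x _; rewrite count_upto.
Qed.

Lemma count_seqs_upto_widen A m m' (P : pred (seq nat)) : m <= m' ->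
  {in seqs_upto A m', forall s, P s -> size s <= m} ->
  count P (seqs_upto A m) = count P (seqs_upto A m').
Proof.
elim: m' => [|m' IHm']; first by rewrite leqn0 => /eqP->.
rewrite leq_eqVlt => /predU1P[-> // | lt_mm'] small.
have sub : {subset seqs_upto A m' <= seqs_upto A m'.+1}.
  by move=> s s_m'; rewrite seqs_upto_S mem_cat s_m'.
rewrite seqs_upto_S count_cat -IHm' // => [|s /sub]; last exact: small.
rewrite -[LHS]addn0 -(count_pred0 (seqs_len A m'.+1)); congr (_ + _).
apply: eq_in_count => s s_m'; apply/esym/negP => /small.
rewrite seqs_upto_S mem_cat s_m' orbT => /(_ isT).
by move: s_m'; rewrite mem_seqs_len => /andP[/eqP->]; rewrite leqNgt lt_mm'.
Qed.

Lemma size_le_sumn s : all (fun c => 0 < c) s -> size s <= sumn s.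
Proof. by elim: s => //= x s IHs /andP[x_gt0 /IHs]; lia. Qed.

Lemma mem_leq_sumn s x : x \in s -> x <= sumn s.
Proof.
elim: s => //= y s IHs; rewrite inE => /predU1P[-> | /IHs]; lia.
Qed.

Lemma is_comp_cons k x s : 0 < x <= k -> is_comp k (x :: s) = is_comp (k - x) s.
Proof.
case/andP=> x_gt0 x_le_k; rewrite /is_comp /= x_gt0; congr andb.
by apply/eqP/eqP; lia.
Qed.

Lemma comp_mem_seqs_upto k a N s :
  is_comp k s -> k <= a -> k <= N -> s \in seqs_upto (iota 1 a) N.
Proof.
move=> /andP[s_pos /eqP sum_s] k_a k_N; rewrite mem_seqs_upto.
rewrite (leq_trans (size_le_sumn s_pos)) ?sum_s //=.
apply/allP => c c_s; rewrite inE mem_iota (allP s_pos c c_s) /=.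
by have := mem_leq_sumn c_s; lia.
Qed.

Lemma count_comp_seqs_upto k a N (P : pred (seq nat)) :
  (forall s, P s -> is_comp k s) -> k <= a -> k <= N ->
  count P (seqs_upto (iota 1 a) N) = count P (cand k).
Proof.
move=> Pcomp k_a k_N; apply: eq_count_uniq; rewrite ?uniq_seqs_upto ?iota_uniq //.
by move=> s /Pcomp s_k; rewrite candE !(comp_mem_seqs_upto s_k).
Qed.

Lemma count_comp_S n (R : pred (seq nat)) :
  count (fun s => is_comp n.+1 s && R s) (cand n.+1) =
  \sum_(x <- iota 1 n.+1)
     count (fun s => is_comp (n.+1 - x) s && R (x :: s)) (cand (n.+1 - x)).
Proof.
rewrite candE count_seqs_upto_S [is_comp _ [::]]/= add0n.
apply: eq_big_seq => x; rewrite mem_iota => x_range.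
rewrite (eq_count (a2 := fun s => is_comp (n.+1 - x) s && R (x :: s))).
  by apply: count_comp_seqs_upto => [s /andP[]||]; lia.
by move=> s; rewrite is_comp_cons //; lia.
Qed.

Definition prefix_max (s : seq nat) (i : nat) := \max_(j < size s | j <= i) nth 0 s j.
Definition suffix_max (s : seq nat) (i : nat) := \max_(j < size s | i <= j) nth 0 s j.

Lemma waterE s :
  water s = \sum_(i < size s) (minn (prefix_max s i) (suffix_max s i) - nth 0 s i).
Proof. by []. Qed.

Lemma bigmax_cons (P : pred nat) x s :
  \max_(j < size (x :: s) | P j) nth 0 (x :: s) j =
  maxn (if P 0 then x else 0) (\max_(j < size s | P j.+1) nth 0 s j).
Proof. by rewrite big_mkcond big_ord_recl [in RHS]big_mkcond. Qed.

Lemma prefix_max_consS x s i : prefix_max (x :: s) i.+1 = maxn x (prefix_max s i).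
Proof. by rewrite /prefix_max (bigmax_cons (fun j => j <= i.+1)). Qed.

Lemma suffix_max_cons0 x s : suffix_max (x :: s) 0 = maxn x (suffix_max s 0).
Proof. by rewrite /suffix_max (bigmax_cons (leq 0)). Qed.

Lemma suffix_max_consS x s i : suffix_max (x :: s) i.+1 = suffix_max s i.
Proof. by rewrite /suffix_max (bigmax_cons (leq i.+1)) max0n. Qed.

Lemma water_cons x s :
  water (x :: s) =
  \sum_(i < size s) (minn (maxn x (prefix_max s i)) (suffix_max s i) - nth 0 s i).
Proof.
rewrite waterE big_ord_recl /=.
have -> : prefix_max (x :: s) 0 = x.
  by rewrite /prefix_max (bigmax_cons (fun j => j <= 0)) big_pred0 ?maxn0.
rewrite (eqP (geq_minl _ _)) add0n; apply: eq_bigr => i _.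
by rewrite prefix_max_consS suffix_max_consS.
Qed.

Lemma water_cons_low x s : all (leq x) s -> water (x :: s) = water s.
Proof.
move=> x_low; rewrite water_cons waterE; apply: eq_bigr => i _.
rewrite (maxn_idPr _) // (leq_trans (allP x_low _ (mem_nth 0 (ltn_ord i)))) //.
exact: (@leq_bigmax_cond _ (fun j : 'I_(size s) => j <= i) (fun j => nth 0 s j) i).
Qed.

Lemma water_cons_high x s : all (fun c => c <= x) s ->
  water (x :: s) = \sum_(i < size s) (minn x (suffix_max s i) - nth 0 s i).
Proof.
move=> x_high; rewrite water_cons; apply: eq_bigr => i _.
rewrite (maxn_idPl _) //; apply/bigmax_leqP => j _.
exact: (allP x_high _ (mem_nth 0 (ltn_ord j))).
Qed.

Definition all12 (s : seq nat) := all (fun c => (c == 1) || (c == 2)) s.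

Fixpoint ones_before_2 (s : seq nat) : nat :=
  if s is x :: t then ((x == 1) && (2 \in t)) + ones_before_2 t else 0.

Lemma all12_pos s : all12 s -> all (fun c => 0 < c) s.
Proof. by move=> s12; apply/allP => c /(allP s12) /orP[] /eqP->. Qed.

Lemma all12_le2 s : all12 s -> all (fun c => c <= 2) s.
Proof. by move=> s12; apply/allP => c /(allP s12) /orP[] /eqP->. Qed.

Lemma suffix_max0_ge2 s : all12 s -> (2 <= suffix_max s 0) = (2 \in s).
Proof.
elim: s => [|x s IHs]; first by rewrite /suffix_max big_ord0.
rewrite /all12 /= => /andP[x12 s12].
by rewrite suffix_max_cons0 leq_max IHs // inE; case/orP: x12 => /eqP->.
Qed.

Lemma water_cons2 s : all12 s -> water (2 :: s) = ones_before_2 s.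
Proof.
move=> s12; rewrite water_cons_high ?all12_le2 //.
elim: s s12 => [|x s IHs]; first by rewrite big_ord0.
rewrite /all12 /= => /andP[x12 s12]; rewrite big_ord_recl -IHs //.
congr (_ + _); last by apply: eq_bigr => i _; rewrite suffix_max_consS.
rewrite /= suffix_max_cons0 -suffix_max0_ge2 //.
by case/orP: x12 => /eqP->; case: leqP; lia.
Qed.

Definition area (s : seq nat) := sumn s + water s.

(* The area of [s] behind a wall of height 2, i.e. [area (2 :: s) - 2]. *)
Definition walled_area (s : seq nat) := sumn s + ones_before_2 s.

Lemma area_nil : area [::] = 0.
Proof. by rewrite /area waterE big_ord0. Qed.

Lemma area_cons1 s : all12 s -> area (1 :: s) = (area s).+1.
Proof. by move=> s12; rewrite /area water_cons_low ?all12_pos. Qed.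

Lemma area_cons2 s : all12 s -> area (2 :: s) = (walled_area s).+2.
Proof. by move=> s12; rewrite /area water_cons2. Qed.

Lemma walled_area_cons1 s : walled_area (1 :: s) = (walled_area s + (2 \in s)).+1.
Proof. by rewrite /walled_area /=; lia. Qed.

Lemma walled_area_cons2 s : walled_area (2 :: s) = (walled_area s).+2.
Proof. by rewrite /walled_area /=; lia. Qed.

Lemma walled_area_nseq1 k : walled_area (nseq k 1) = k.
Proof.
by elim: k => //= k; rewrite walled_area_cons1 mem_nseq andbF addn0 => ->.
Qed.

Lemma size_le_walled_area s : all12 s -> size s <= walled_area s.
Proof. by move=> /all12_pos /size_le_sumn; rewrite /walled_area; lia. Qed.

Definition seqs12 (m : nat) := seqs_upto [:: 1; 2] m.
Arguments seqs12 : simpl never.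

Lemma mem_seqs12 m s : (s \in seqs12 m) = (size s <= m) && all12 s.
Proof. by rewrite mem_seqs_upto; congr andb; apply: eq_all => c; rewrite !inE. Qed.

Lemma count_seqs12_S m (P : pred (seq nat)) :
  count P (seqs12 m.+1) =
  P [::] + count (fun s => P (1 :: s)) (seqs12 m) + count (fun s => P (2 :: s)) (seqs12 m).
Proof. by rewrite /seqs12 count_seqs_upto_S !big_cons big_nil addn0 addnA. Qed.

Lemma count_seqs12_widen m m' (P : pred (seq nat)) : m <= m' ->
  (forall s, all12 s -> P s -> size s <= m) -> count P (seqs12 m) = count P (seqs12 m').
Proof.
move=> le_mm' small; apply: count_seqs_upto_widen => // s.
by rewrite -/(seqs12 m') mem_seqs12 => /andP[_ /small].
Qed.

Lemma all12_no2 s : all12 s -> 2 \notin s -> s = nseq (size s) 1.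
Proof.
elim: s => //= x s IHs /andP[x12 s12]; rewrite inE negb_or => /andP[x_neq2 s_no2].
by rewrite -IHs //; case/orP: x12 x_neq2 => /eqP->.
Qed.

Lemma count_no2 j m : j <= m ->
  count (fun s => (2 \notin s) && (walled_area s == j)) (seqs12 m) = 1.
Proof.
move=> le_jm; have ones12 : all12 (nseq j 1) by apply/allP => c /nseqP[->].
have ones_m : nseq j 1 \in seqs12 m by rewrite mem_seqs12 size_nseq le_jm.
transitivity (count_mem (nseq j 1) (seqs12 m)); last first.
  by rewrite count_uniq_mem ?ones_m ?uniq_seqs_upto.
apply: eq_in_count => s; rewrite mem_seqs12 => /andP[_ s12] /=.
apply/andP/eqP => [[s_no2 /eqP<-] | ->]; last first.
  by rewrite walled_area_nseq1 mem_nseq andbF.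
by rewrite {2}(all12_no2 s12 s_no2) walled_area_nseq1 -all12_no2.
Qed.

Definition area_count (n : nat) := count (fun s => area s == n) (seqs12 n).
Definition walled_count (n : nat) := count (fun s => walled_area s == n) (seqs12 n).

Lemma walled_count_widen n m : n <= m ->
  walled_count n = count (fun s => walled_area s == n) (seqs12 m).
Proof.
by move=> le_nm; apply: count_seqs12_widen => // s s12 /eqP<-; apply: size_le_walled_area.
Qed.

Lemma walled_count_SS n : walled_count n.+2 = 2 * walled_count n.
Proof.
rewrite {1}/walled_count count_seqs12_S add0n.
under eq_count do rewrite walled_area_cons1 eqSS.
under [count _ _ in RHS in _ + RHS = _]eq_count do rewrite walled_area_cons2 eqSS.
rewrite -walled_count_widen // mul2n -addnn; congr (_ + _).
rewrite (walled_count_widen (leqnSn n)) (count_split (fun s => 2 \in s)).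
rewrite [RHS](count_split (fun s => 2 \in s)) count_no2 //.
congr (_ + _).
  by apply: eq_count => s; case: (2 \in s); rewrite /= ?addn1 ?eqSS.
rewrite -[RHS](count_no2 (leqnn n.+1)).
by apply: eq_count => s; case: (2 \in s); rewrite /= ?addn0.
Qed.

Lemma area_count_SS n : area_count n.+2 = area_count n.+1 + walled_count n.
Proof.
rewrite {1}/area_count count_seqs12_S area_nil add0n (walled_count_widen (leqnSn n)).
congr (_ + _); apply: eq_in_count => s; rewrite mem_seqs12 => /andP[_ s12].
  by rewrite area_cons1.
by rewrite area_cons2.
Qed.

Lemma is_comp12E m s : is_comp12 m s = all12 s && (sumn s == m).
Proof.
rewrite /is_comp12 /is_comp -/(all12 s); case s12: (all12 s); last by rewrite andbF.
by rewrite (all12_pos s12) andbT.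
Qed.

Lemma w_seqs12 m k N : m <= N ->
  w m k = count (fun s => (sumn s == m) && (water s == k)) (seqs12 N).
Proof.
move=> le_mN; rewrite /w; apply/esym.
under eq_in_count => s.
  rewrite mem_seqs12 => /andP[_ s12].
  rewrite (_ : sumn s == m = is_comp12 m s); last by rewrite is_comp12E s12.
  over.
apply: eq_count_uniq; rewrite ?uniq_seqs_upto ?iota_uniq // => s.
case/andP=> /andP[s_comp s12] _; rewrite candE (comp_mem_seqs_upto s_comp) //.
move: s_comp => /andP[s_pos /eqP sum_s].
by rewrite mem_seqs12 /all12 s12 (leq_trans (size_le_sumn s_pos)) ?sum_s.
Qed.

Lemma sum_area_split s n :
  \sum_(k < n.+1) ((sumn s == n - k) && (water s == k)) = (area s == n).
Proof.
rewrite (eq_bigr (fun k : 'I_n.+1 =>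
    if k == water s :> nat then nat_of_bool (sumn s == n - k) else 0)); last first.
  by move=> k _; case: (eqVneq (nat_of_ord k) (water s)); rewrite ?andbT ?andbF.
rewrite -(big_mkcond (fun k : 'I_n.+1 => k == water s :> nat)).
rewrite (big_ord1_eq _ (fun k => nat_of_bool (sumn s == n - k))) /area.
case: ltnP => w_n; first by congr nat_of_bool; apply/eqP/eqP; lia.
by case: eqP => //; lia.
Qed.

Lemma d_area_count n : d n = area_count n.
Proof.
have count_sum (P : pred (seq nat)) l : count P l = \sum_(s <- l) P s.
  by rewrite -sumn_count sumnE big_map.
rewrite /d; under eq_bigr => k _ do rewrite (w_seqs12 _ (leq_subr k n)) count_sum.
by rewrite /area_count count_sum exchange_big; apply: eq_bigr => s _; rewrite sum_area_split.
Qed.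

Lemma walled_count_closed n : walled_count n = 2 ^ n./2.
Proof.
suff : walled_count n = 2 ^ n./2 /\ walled_count n.+1 = 2 ^ n.+1./2 by case.
elim: n => [|n [IHn IHn1]]; first by split; vm_compute.
by rewrite walled_count_SS IHn -expnS.
Qed.

Lemma d_SS n : d n.+2 = d n.+1 + 2 ^ n./2.
Proof. by rewrite !d_area_count area_count_SS walled_count_closed. Qed.

Lemma d_small : d 0 = 1 /\ d 1 = 1.
Proof.
rewrite !d_area_count /area_count count_seqs12_S /seqs12 /seqs_upto /=.
by rewrite area_cons1 // area_nil.
Qed.

Definition even_init (s : seq nat) := all (fun c => ~~ odd c) (take (size s).-1 s).

(* The tails, after their first part, of the compositions counted by [c_ie]. *)
Definition even_init_count (n : nat) :=
  count (fun s => is_comp n s && even_init s) (cand n).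

Lemma even_init_count_S n :
  even_init_count n.+1 = \sum_(x <- iota 1 n) ~~ odd x * even_init_count (n.+1 - x) + 1.
Proof.
rewrite /even_init_count count_comp_S.
have -> : iota 1 n.+1 = iota 1 n ++ [:: n.+1] by rewrite -[n.+1]addn1 iotaD add1n addn1.
rewrite big_cat big_seq1 subnn.
congr (_ + _); apply: eq_big_seq => x; rewrite mem_iota => x_range.
rewrite -count_andl; apply: eq_count => -[|y t] /=; last by rewrite andbCA.
by rewrite /is_comp /=; case: eqP; rewrite ?andbF //; lia.
Qed.

Lemma even_init_count_SS n : even_init_count n.+3 = 2 * even_init_count n.+1.
Proof.
rewrite even_init_count_S [in RHS]even_init_count_S.
rewrite (_ : iota 1 n.+2 = 1 :: 2 :: iota (2 + 1) n) // iotaDl !big_cons big_map /=.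
under eq_bigr do rewrite oddD /= negbK -[n.+3]/(2 + n.+1) subnDl.
by rewrite [even_init_count n.+1]even_init_count_S; lia.
Qed.

Lemma even_init_count_closed n : even_init_count n.+1 = 2 ^ n./2.
Proof.
suff : even_init_count n.+1 = 2 ^ n./2 /\ even_init_count n.+2 = 2 ^ n.+1./2 by case.
elim: n => [|n [IHn IHn1]]; first by split; vm_compute.
by rewrite even_init_count_SS IHn -expnS.
Qed.

Lemma c_ie_S n : c_ie n.+1 = \sum_(x <- iota 1 n.+1) even_init_count (n.+1 - x).
Proof.
rewrite /c_ie count_comp_S /even_init_count; apply: eq_bigr => x _.
by apply: eq_count => -[|y t]; rewrite /internal /even_init /= ?drop0.
Qed.

Lemma c_ie_SS n : c_ie n.+2 = c_ie n.+1 + 2 ^ n./2.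
Proof.
rewrite !c_ie_S (_ : iota 1 n.+2 = 1 :: iota (1 + 1) n.+1) // iotaDl big_cons big_map.
under eq_bigr do rewrite -[n.+2]/(1 + n.+1) subnDl.
by rewrite addnC even_init_count_closed.
Qed.

Lemma c_ie_small : c_ie 0 = 1 /\ c_ie 1 = 1.
Proof. by split; vm_compute. Qed.

Section HalfPowerRecurrence.

Variable f : nat -> nat.
Hypotheses (f0 : f 0 = 1) (f1 : f 1 = 1) (fSS : forall n, f n.+2 = f n.+1 + 2 ^ n./2).

Lemma half_pow_rec_unique (g : nat -> nat) : g 0 = 1 -> g 1 = 1 ->
  (forall n, g n.+2 = g n.+1 + 2 ^ n./2) -> f =1 g.
Proof.
move=> g0 g1 gSS n; suff : f n = g n /\ f n.+1 = g n.+1 by case.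
elim: n => [|n [_ IHn1]]; first by rewrite f0 f1 g0 g1.
by rewrite fSS gSS IHn1.
Qed.

Lemma half_pow_rec_closed m : f m.*2.+1 = 2 ^ m.+1 - 1 /\ f m.*2.+2 = 3 * 2 ^ m - 1.
Proof.
elim: m => [|m [IHodd IHeven]]; first by rewrite fSS f1.
have pos : 0 < 2 ^ m by rewrite expn_gt0.
have odd_next : f m.*2.+3 = 2 ^ m.+2 - 1.
  by rewrite fSS IHeven /= uphalf_double !expnS; lia.
by split => //; rewrite fSS odd_next /= doubleK !expnS; lia.
Qed.

Lemma half_pow_rec_shift n : f n.+4 + 2 * f n.+1 = f n.+3 + 2 * f n.+2.
Proof. by rewrite !fSS /= expnS; lia. Qed.

Local Open Scope ring_scope.

Lemma half_pow_rec_series N :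
  take_poly N (\poly_(i < N) ((f i)%:R : int) * (1 - 'X - 2%:P * 'X^2 + 2%:P * 'X^3))
  = take_poly N (1 - 'X^2 + 'X^3 : {poly int}).
Proof.
apply/polyP => j; rewrite !coef_take_poly; case: ifP => // lt_jN.
set p := \poly_(i < N) _.
have p_coef i : (i <= j)%N -> p`_i = (f i)%:R.
  by move=> le_ij; rewrite coef_poly (leq_ltn_trans le_ij lt_jN).
rewrite !mulrDr !mulrN mulr1 !mulrA !coefD !coefN !coefMX !coefMC.
have f2 : f 2 = 2 by rewrite fSS f1.
have f3 : f 3 = 3 by rewrite fSS f2.
case: j {lt_jN} p_coef => [|[|[|[|j]]]] p_coef /=;
  rewrite !p_coef ?coef1 ?coefX ?coefXn ?f0 ?f1 ?f2 ?f3 //=; try lia.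
by have := half_pow_rec_shift j; lia.
Qed.

End HalfPowerRecurrence.

Local Open Scope ring_scope.

Theorem theorem2p5 :
  (forall n : nat, d n = c_ie n)
  /\ (forall N : nat,
        take_poly N (\poly_(i < N) ((d i)%:R : int) * (1 - 'X - 2%:P * 'X^2 + 2%:P * 'X^3))
        = take_poly N (1 - 'X^2 + 'X^3 : {poly int}))
  /\ (forall m : nat, (1 <= m)%N ->
        d (2 * m - 1) = (2 ^ m - 1)%N /\ d (2 * m) = (3 * 2 ^ (m - 1) - 1)%N).
Proof.
have [d0 d1] := d_small.
have [c0 c1] := c_ie_small.
split; first exact: (half_pow_rec_unique d0 d1 d_SS c0 c1 c_ie_SS).
split; first exact: half_pow_rec_series d0 d1 d_SS.
case=> [|m] // _; rewrite mul2n doubleS !subSS !subn0.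
exact: half_pow_rec_closed d0 d1 d_SS m.
Qed.
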